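(* Let $p,q,r$ be distinct sentential variables. In the class of $\Delta$ models (described in the context), each of the following implications holds, where $\varphi\models_\Delta\psi$ means that $[\![\varphi]\!]_M\subseteq[\![\psi]\!]_M$ for every $\Delta$ model $M$: (a) $\mathbb{O}p\wedge(\neg p\succ\neg q)\models_\Delta \mathbb{O}q$; (b) $\mathbb{O}q\wedge(p\succ q)\models_\Delta \mathbb{O}p$; (c) $\mathbb{C}(p,q)\wedge p\models_\Delta \mathbb{O}q$; (d) $\mathbb{C}(p\wedge r,q)\wedge\mathbb{C}(p\wedge\neg r,q)\models_\Delta \mathbb{C}(p,q)$; (e) $\mathbb{C}(p,q)\models_\Delta \mathbb{C}(p\wedge r,q)\vee\mathbb{C}(p\wedge\neg r,q)$; (f) $\mathbb{O}(p\wedge q)\wedge\mathbb{O}(p\wedge\neg q)\models_\Delta \mathbb{O}p$.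
   Context: Fix a set $\mathrm{PROPS}$ of sentential variables (containing $p,q,r$). The language $\mathcal{L}$: every $v\in\mathrm{PROPS}$ is a formula; if $\varphi,\psi$ are formulas so are $\neg\varphi$, $(\varphi\wedge\psi)$, $(\varphi\succeq\psi)$. Abbreviations: $\vee,\rightarrow,\leftrightarrow$ as usual in terms of $\neg,\wedge$; $\varphi\succ\psi := (\varphi\succeq\psi)\wedge\neg(\psi\succeq\varphi)$; $\top := (v_0\rightarrow v_0)$ for a fixed variable $v_0$. Deontic operators: $\mathbb{C}(\varphi,\psi) := (\varphi\wedge\psi)\succ(\varphi\wedge\neg\psi)$ (conditional obligation); $\mathbb{O}\psi := \mathbb{C}(\top,\psi)$ (obligation); $\mathbb{P}\psi:=\neg\mathbb{O}\neg\psi$ (permission). A model is $M=(W,\sigma,u,t)$ with $W$ a nonempty set, $\sigma:W\times\{A\subseteq W:A\ne\emptyset\}\to W$ with $\sigma(w,A)\in A$, $u:W\to\mathbb{R}$, and $t:\mathrm{PROPS}\to\mathcal{P}(W)$. Semantics: $[\![v]\!]_M=t(v)$; $[\![\neg\theta]\!]_M=W\setminus[\![\theta]\!]_M$; $[\![\theta\wedge\psi]\!]_M=[\![\theta]\!]_M\cap[\![\psi]\!]_M$; $[\![\theta\succeq\psi]\!]_M=\emptyset$ if either $[\![\theta]\!]_M$ or $[\![\psi]\!]_M$ is empty, otherwise $\{w: u(\sigma(w,[\![\theta]\!]_M))\ge u(\sigma(w,[\![\psi]\!]_M))\}$. A model is a $\Delta$ model if (i) $W$ is the power set of $\mathrm{PROPS}$;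 (ii) $t(v)=\{w\in W: v\in w\}$ for each $v\in\mathrm{PROPS}$; (iii) $\sigma$ is $\Delta$-based: for all $w_0\in W$ and nonempty $A\subseteq W$ there is no $w_1\in A$ with $w_0\,\triangle\, w_1\subsetneq w_0\,\triangle\,\sigma(w_0,A)$, where $\triangle$ denotes symmetric difference of sets. The utility function $u$ is arbitrary. *)

From Stdlib Require Import Reals.
Open Scope R_scope.

Section Logic.
Variable PROPS : Type.

Inductive form : Type :=
| Var : PROPS -> form
| Neg : form -> form
| And : form -> form -> form
| Pref : form -> form -> form.

Definition Or (a b : form) : form := Neg (And (Neg a) (Neg b)).
Definition Imp (a b : form) : form := Neg (And a (Neg b)).
Definition Iff (a b : form) : form := And (Imp a b) (Imp b a).
Definition SPref (a b : form) : form := And (Pref a b) (Neg (Pref b a)).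
Definition Top (v0 : PROPS) : form := Imp (Var v0) (Var v0).
Definition CondO (a b : form) : form := SPref (And a b) (And a (Neg b)).
Definition Obl (v0 : PROPS) (b : form) : form := CondO (Top v0) b.
Definition Perm (v0 : PROPS) (b : form) : form := Neg (Obl v0 (Neg b)).

Definition world : Type := PROPS -> Prop.

Definition symdiff (X Y : world) : world :=
  fun v => (X v /\ ~ Y v) \/ (~ X v /\ Y v).

Definition strict_subset (X Y : world) : Prop :=
  (forall v, X v -> Y v) /\ (exists v, Y v /\ ~ X v).

(* A Delta model: W = power set of PROPS, t(v) = {w | v ∈ w},
   a Delta-based selection function sigma (only its values on nonempty
   sets A matter), and an arbitrary utility u. *)
Record DeltaModel : Type := {
  sigma : world -> (world -> Prop) -> world;
  u : world -> R;
  sigma_in : forall (w : world) (A : world -> Prop),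
      (exists x, A x) -> A (sigma w A);
  sigma_Delta : forall (w0 : world) (A : world -> Prop),
      (exists x, A x) ->
      ~ (exists w1, A w1 /\
           strict_subset (symdiff w0 w1) (symdiff w0 (sigma w0 A)))
}.

Definition tval (v : PROPS) : world -> Prop := fun w => w v.

Fixpoint sem (M : DeltaModel) (f : form) : world -> Prop :=
  match f with
  | Var v => tval v
  | Neg a => fun w => ~ sem M a w
  | And a b => fun w => sem M a w /\ sem M b w
  | Pref a b => fun w =>
      (exists x, sem M a x) /\ (exists y, sem M b y) /\
      u M (sigma M w (sem M a)) >= u M (sigma M w (sem M b))
  end.

Definition entails_Delta (a b : form) : Prop :=
  forall (M : DeltaModel) (w : world), sem M a w -> sem M b w.

End Logic.

Arguments Var {PROPS}.
Arguments Neg {PROPS}.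
Arguments And {PROPS}.
Arguments Pref {PROPS}.
Arguments SPref {PROPS}.
Arguments Top {PROPS}.
Arguments CondO {PROPS}.
Arguments Obl {PROPS}.
Arguments Or {PROPS}.
Arguments entails_Delta {PROPS}.

(* In a Delta model, sigma(w, A) is a change of w landing in A that cannot be
   strictly shrunk.  If A is a conjunction of literals over distinct variables
   there is a least such change, namely flipping exactly the violated literals,
   so sigma(w, A) is determined; in particular sigma(w, A) = w when w is in A.
   Moreover O phi holds at w iff phi > ~phi does.  Parts (a) and (b) then hold
   for arbitrary formulas, using only that the selection of a formula true at
   w is w itself.  In (c)-(e) the selections compared by the hypothesis and by
   the conclusion turn out to be the same worlds.  In (f) the selection for
   ~(p /\ q) is not determined, but it flips exactly one of p, q, and either
   choice is ruled out or yields the conclusion. *)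

From Pilot Require Import Defs.
From Stdlib Require Import Reals Lra Classical FunctionalExtensionality PropExtensionality.
Open Scope R_scope.

Section Worlds.
Context {PROPS : Type}.

Definition upd (t : world PROPS) (v : PROPS) (P : Prop) : world PROPS :=
  fun x => (x = v -> P) /\ (x <> v -> t x).

Lemma upd_eq t v P : upd t v P v <-> P.
Proof.
  unfold upd; split; [intros [H _]; auto | intros H; split; [auto | intros []; reflexivity]].
Qed.

Lemma upd_neq t v P x : x <> v -> (upd t v P x <-> t x).
Proof.
  unfold upd; intros Hx; split;
    [intros [_ H]; auto | intros H; split; [intros ->; contradiction | auto]].
Qed.

Lemma world_ext (s t : world PROPS) : (forall x, s x <-> t x) -> s = t.
Proof.
  intros H; apply functional_extensionality; intro x.
  apply propositional_extensionality, H.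
Qed.

Lemma upd_id t v P : (t v <-> P) -> upd t v P = t.
Proof.
  intros Hv; apply world_ext; intro x.
  destruct (classic (x = v)) as [->|Hx]; [rewrite upd_eq | rewrite upd_neq]; tauto.
Qed.

End Worlds.

Section Selection.
Context {PROPS : Type} (M : DeltaModel PROPS) (w : world PROPS).

Local Notation sem := (Defs.sem PROPS M).
Local Notation u := (Defs.u PROPS M).
Local Notation σ := (Defs.sigma PROPS M w).

(* Otherwise t would be a strictly smaller change of w than sigma A. *)
Lemma sigma_eq (A : world PROPS -> Prop) (t : world PROPS) :
  A t -> (forall x, ~ (t x <-> w x) -> (σ A x <-> t x)) -> σ A = t.
Proof.
  intros At Hagree; apply world_ext; intro x.
  apply NNPP; intro Hx.
  apply (sigma_Delta PROPS M w A (ex_intro _ t At)).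
  exists t; split; [exact At | split].
  - intros y Hy; specialize (Hagree y); unfold symdiff in *; tauto.
  - exists x; specialize (Hagree x); unfold symdiff.
    destruct (classic (w x)), (classic (t x)); tauto.
Qed.

Lemma sigma_mem {A : world PROPS -> Prop} {t : world PROPS} : A t -> A (σ A).
Proof. intros At; exact (sigma_in PROPS M w A (ex_intro _ t At)). Qed.

Lemma sigma_self (A : world PROPS -> Prop) : A w -> σ A = w.
Proof. intros Aw; apply sigma_eq; [exact Aw | tauto]. Qed.

Lemma sigma_upd (A : world PROPS -> Prop) v P :
  A (upd w v P) -> (σ A v <-> P) -> σ A = upd w v P.
Proof.
  intros At Hv; apply sigma_eq; [exact At|]; intros x Hx.
  destruct (classic (x = v)) as [->|Hxv].
  - rewrite upd_eq; exact Hv.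
  - rewrite upd_neq in * by exact Hxv; tauto.
Qed.

Lemma sigma_upd2 (A : world PROPS -> Prop) v1 v2 P1 P2 :
  A (upd (upd w v1 P1) v2 P2) -> (σ A v1 <-> P1) -> (σ A v2 <-> P2) ->
  σ A = upd (upd w v1 P1) v2 P2.
Proof.
  intros At H1 H2; apply sigma_eq; [exact At|]; intros x Hx.
  destruct (classic (x = v2)) as [->|Hx2]; [rewrite upd_eq; exact H2|].
  rewrite upd_neq in * by exact Hx2.
  destruct (classic (x = v1)) as [->|Hx1]; [rewrite upd_eq; exact H1|].
  rewrite upd_neq in * by exact Hx1; tauto.
Qed.

Definition sel (f : form PROPS) : world PROPS := σ (sem f).

Definition selects (f : form PROPS) (t : world PROPS) : Prop := sel f = t /\ sem f t.

Lemma sel_self f : sem f w -> sel f = w.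
Proof. apply sigma_self. Qed.

Lemma selects_self f : sem f w -> selects f w.
Proof. intros Hf; exact (conj (sel_self f Hf) Hf). Qed.

Lemma sem_SPref a b :
  sem (SPref a b) w <-> sem a (sel a) /\ sem b (sel b) /\ u (sel b) < u (sel a).
Proof.
  unfold SPref, sel; simpl; split.
  - intros [[[x Hx] [[y Hy] _]] Hn].
    split; [exact (sigma_mem Hx) | split; [exact (sigma_mem Hy)|]].
    apply Rnot_le_lt; intro Hle; apply Hn.
    split; [exists y; exact Hy | split; [exists x; exact Hx | lra]].
  - intros (Ha & Hb & Hlt); split.
    + split; [eauto | split; [eauto | lra]].
    + intros (_ & _ & Hge); lra.
Qed.

Lemma sem_SPref_selects {a b s t} :
  selects a s -> selects b t -> (sem (SPref a b) w <-> u t < u s).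
Proof. intros [Ea Ha] [Eb Hb]; rewrite sem_SPref, Ea, Eb; tauto. Qed.

Lemma sem_SPref_congr a a' b b' :
  sem a = sem a' -> sem b = sem b' -> sem (SPref a b) = sem (SPref a' b').
Proof. intros Ha Hb; unfold SPref; simpl; rewrite Ha, Hb; reflexivity. Qed.

Lemma sem_Obl v0 a : sem (Obl v0 a) = sem (SPref a (Neg a)).
Proof.
  assert (Htop : forall f, sem (And (Top v0) f) = sem f).
  { intro f; apply functional_extensionality; intro x.
    apply propositional_extensionality; simpl; tauto. }
  apply sem_SPref_congr; apply Htop.
Qed.

Lemma spref_neg_bounds a :
  sem (SPref a (Neg a)) w -> u (sel (Neg a)) <= u w <= u (sel a).
Proof.
  intros H; apply sem_SPref in H as (_ & _ & Hlt).
  destruct (classic (sem a w)) as [Ha|Ha].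
  - rewrite (sel_self a Ha) in *; lra.
  - rewrite (sel_self (Neg a) Ha) in *; lra.
Qed.

Definition is_lit (L : form PROPS) (v : PROPS) (P : Prop) : Prop :=
  forall y, sem L y <-> (y v <-> P).

Lemma is_lit_Var v : is_lit (Var v) v True.
Proof. intro y; simpl; unfold tval; tauto. Qed.

Lemma is_lit_Neg {L v P} : is_lit L v P -> is_lit (Neg L) v (~ P).
Proof. intros HL y; specialize (HL y); simpl; destruct (classic P); tauto. Qed.

Lemma selects_lit {L v P} : is_lit L v P -> selects L (upd w v P).
Proof.
  intros HL.
  assert (Hmem : sem L (upd w v P)) by (apply HL, upd_eq).
  split; [|exact Hmem].
  apply sigma_upd; [exact Hmem|]; apply HL, (sigma_mem Hmem).
Qed.

Lemma selects_and_lits {L1 L2 v1 v2 P1 P2} :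
  v1 <> v2 -> is_lit L1 v1 P1 -> is_lit L2 v2 P2 ->
  selects (And L1 L2) (upd (upd w v1 P1) v2 P2).
Proof.
  intros Hv H1 H2.
  assert (Hmem : sem (And L1 L2) (upd (upd w v1 P1) v2 P2)).
  { split; [apply H1; rewrite upd_neq, upd_eq by exact Hv | apply H2, upd_eq]; tauto. }
  split; [|exact Hmem].
  destruct (sigma_mem Hmem) as [Hs1 Hs2].
  apply sigma_upd2; [exact Hmem | apply H1, Hs1 | apply H2, Hs2].
Qed.

Lemma selects_and_lits_true {L1 Lr L2 v1 r v2 P1 Pr P2} :
  v1 <> v2 -> r <> v1 -> r <> v2 ->
  is_lit L1 v1 P1 -> is_lit Lr r Pr -> is_lit L2 v2 P2 -> sem Lr w ->
  selects (And (And L1 Lr) L2) (upd (upd w v1 P1) v2 P2).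
Proof.
  intros Hv Hr1 Hr2 H1 Hr H2 Hw.
  assert (Hmem : sem (And (And L1 Lr) L2) (upd (upd w v1 P1) v2 P2)).
  { apply Hr in Hw.
    split; [split|];
      [ apply H1; rewrite upd_neq, upd_eq by exact Hv
      | apply Hr; rewrite !upd_neq by assumption
      | apply H2, upd_eq ]; tauto. }
  split; [|exact Hmem].
  destruct (sigma_mem Hmem) as [[Hs1 _] Hs2].
  apply sigma_upd2; [exact Hmem | apply H1, Hs1 | apply H2, Hs2].
Qed.

Lemma sel_neg_and_lits {L1 L2 v1 v2 P1 P2} :
  is_lit L1 v1 P1 -> is_lit L2 v2 P2 ->
  sel (Neg (And L1 L2)) = upd w v1 (~ P1) \/ sel (Neg (And L1 L2)) = upd w v2 (~ P2).
Proof.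
  intros H1 H2.
  assert (Hmem1 : sem (Neg (And L1 L2)) (upd w v1 (~ P1))).
  { intros [Hy _]; apply H1 in Hy; rewrite upd_eq in Hy; tauto. }
  assert (Hmem2 : sem (Neg (And L1 L2)) (upd w v2 (~ P2))).
  { intros [_ Hy]; apply H2 in Hy; rewrite upd_eq in Hy; tauto. }
  pose proof (sigma_mem Hmem1) as Hs; fold (sel (Neg (And L1 L2))) in Hs.
  specialize (H1 (sel (Neg (And L1 L2)))); specialize (H2 (sel (Neg (And L1 L2)))).
  destruct (classic (sem L1 (sel (Neg (And L1 L2))))) as [Hs1|Hs1].
  - right; apply sigma_upd; [exact Hmem2|]; destruct (classic P2); simpl in Hs; tauto.
  - left; apply sigma_upd; [exact Hmem1|]; destruct (classic P1); tauto.
Qed.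

Lemma obl_of_neg_pref v0 {a b} :
  sem (Obl v0 a) w -> sem (SPref (Neg a) (Neg b)) w -> sem (Obl v0 b) w.
Proof.
  rewrite !sem_Obl; intros Ha Hab.
  destruct (spref_neg_bounds a Ha) as [Hle _].
  apply sem_SPref in Hab as (_ & Hnb & Hlt).
  assert (Hb : sem b w).
  { apply NNPP; intro Hnbw; rewrite (sel_self (Neg b) Hnbw) in Hlt; lra. }
  apply sem_SPref; rewrite (sel_self b Hb); repeat split; [exact Hb | exact Hnb | lra].
Qed.

Lemma obl_of_pref v0 {a b} :
  sem (Obl v0 b) w -> sem (SPref a b) w -> sem (Obl v0 a) w.
Proof.
  rewrite !sem_Obl; intros Hb Hab.
  destruct (spref_neg_bounds b Hb) as [_ Hge].
  apply sem_SPref in Hab as (Ha & _ & Hlt).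
  assert (Hna : ~ sem a w) by (intro Haw; rewrite (sel_self a Haw) in Hlt; lra).
  apply sem_SPref; rewrite (sel_self (Neg a) Hna); repeat split; [exact Ha | exact Hna | lra].
Qed.

Lemma obl_of_condO_fact v0 {L1 L2 v1 v2 P1 P2} :
  v1 <> v2 -> is_lit L1 v1 P1 -> is_lit L2 v2 P2 ->
  sem (CondO L1 L2) w -> sem L1 w -> sem (Obl v0 L2) w.
Proof.
  intros Hv H1 H2 HC Hw.
  pose proof (is_lit_Neg H2) as HN2.
  assert (Hid : upd w v1 P1 = w) by (apply upd_id, H1, Hw).
  pose proof (selects_and_lits Hv H1 H2) as Spos.
  pose proof (selects_and_lits Hv H1 HN2) as Sneg.
  rewrite Hid in Spos, Sneg.
  unfold CondO in HC; rewrite (sem_SPref_selects Spos Sneg) in HC.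
  rewrite sem_Obl, (sem_SPref_selects (selects_lit H2) (selects_lit HN2)).
  exact HC.
Qed.

Lemma condO_and_lit {L1 Lr L2 v1 r v2 P1 Pr P2} :
  v1 <> v2 -> r <> v1 -> r <> v2 ->
  is_lit L1 v1 P1 -> is_lit Lr r Pr -> is_lit L2 v2 P2 -> sem Lr w ->
  (sem (CondO (And L1 Lr) L2) w <-> sem (CondO L1 L2) w).
Proof.
  intros Hv Hr1 Hr2 H1 Hr H2 Hw.
  pose proof (is_lit_Neg H2) as HN2.
  unfold CondO.
  rewrite (sem_SPref_selects
             (selects_and_lits_true Hv Hr1 Hr2 H1 Hr H2 Hw)
             (selects_and_lits_true Hv Hr1 Hr2 H1 Hr HN2 Hw)),
          (sem_SPref_selects (selects_and_lits Hv H1 H2)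
             (selects_and_lits Hv H1 HN2)).
  reflexivity.
Qed.

Lemma condO_merge_cases {L1 L2 v1 v2 r P1 P2} :
  v1 <> v2 -> r <> v1 -> r <> v2 -> is_lit L1 v1 P1 -> is_lit L2 v2 P2 ->
  sem (CondO (And L1 (Var r)) L2) w -> sem (CondO (And L1 (Neg (Var r))) L2) w ->
  sem (CondO L1 L2) w.
Proof.
  intros Hv Hr1 Hr2 H1 H2 Hpos Hneg.
  pose proof (is_lit_Var r) as Hr.
  destruct (classic (w r)) as [Hw|Hw].
  - exact (proj1 (condO_and_lit Hv Hr1 Hr2 H1 Hr H2 Hw) Hpos).
  - exact (proj1 (condO_and_lit Hv Hr1 Hr2 H1 (is_lit_Neg Hr) H2 Hw) Hneg).
Qed.

Lemma condO_split_cases {L1 L2 v1 v2 r P1 P2} :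
  v1 <> v2 -> r <> v1 -> r <> v2 -> is_lit L1 v1 P1 -> is_lit L2 v2 P2 ->
  sem (CondO L1 L2) w ->
  sem (CondO (And L1 (Var r)) L2) w \/ sem (CondO (And L1 (Neg (Var r))) L2) w.
Proof.
  intros Hv Hr1 Hr2 H1 H2 HC.
  pose proof (is_lit_Var r) as Hr.
  destruct (classic (w r)) as [Hw|Hw]; [left | right].
  - exact (proj2 (condO_and_lit Hv Hr1 Hr2 H1 Hr H2 Hw) HC).
  - exact (proj2 (condO_and_lit Hv Hr1 Hr2 H1 (is_lit_Neg Hr) H2 Hw) HC).
Qed.

Lemma obl_of_obl_and_lits v0 {L1 L2 L2' v1 v2 P1 P2} :
  v1 <> v2 -> is_lit L1 v1 P1 -> is_lit L2 v2 P2 -> is_lit L2' v2 (~ P2) -> sem L2 w ->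
  sem (Obl v0 (And L1 L2)) w -> sem (Obl v0 (And L1 L2')) w -> sem (Obl v0 L1) w.
Proof.
  rewrite !sem_Obl; intros Hv H1 H2 H2' Hw2 HO HO'.
  pose proof (is_lit_Neg H1) as HN1.
  destruct (classic (sem L1 w)) as [Hw1|Hw1].
  - rewrite (sem_SPref_selects (selects_self L1 Hw1) (selects_lit HN1)).
    apply sem_SPref in HO as (_ & _ & Hlt).
    rewrite (sel_self (And L1 L2) (conj Hw1 Hw2)) in Hlt.
    destruct (spref_neg_bounds _ HO') as [_ Hge].
    destruct (selects_and_lits Hv H1 H2') as [Esel _].
    rewrite (upd_id w v1 P1) in Esel by (apply H1, Hw1).
    rewrite Esel in Hge.
    destruct (sel_neg_and_lits H1 H2) as [E|E]; rewrite E in Hlt; lra.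
  - rewrite (sem_SPref_selects (selects_lit H1) (selects_self (Neg L1) Hw1)).
    pose proof (selects_and_lits Hv H1 H2) as S.
    rewrite (upd_id (upd w v1 P1) v2 P2) in S by (rewrite upd_neq by congruence; apply H2, Hw2).
    rewrite (sem_SPref_selects S (selects_self (Neg (And L1 L2)) (fun H => Hw1 (proj1 H))))
      in HO.
    exact HO.
Qed.

Lemma obl_merge_cases v0 {L1 v1 q P1} :
  v1 <> q -> is_lit L1 v1 P1 ->
  sem (Obl v0 (And L1 (Var q))) w -> sem (Obl v0 (And L1 (Neg (Var q)))) w ->
  sem (Obl v0 L1) w.
Proof.
  intros Hv H1 Hpos Hneg.
  pose proof (is_lit_Var q) as Hq.
  pose proof (is_lit_Neg Hq) as HNq.
  destruct (classic (w q)) as [Hw|Hw].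
  - exact (obl_of_obl_and_lits v0 Hv H1 Hq HNq Hw Hpos Hneg).
  - (* [Var q] as the complement of [Neg (Var q)], whose value is [~ True]. *)
    assert (Hq' : is_lit (Var q) q (~ ~ True)) by (intro y; simpl; unfold tval; tauto).
    exact (obl_of_obl_and_lits v0 Hv H1 HNq Hq' Hw Hneg Hpos).
Qed.

End Selection.

Theorem proposition4p2 (PROPS : Type) (v0 p q r : PROPS)
  (hpq : p <> q) (hqr : q <> r) (hpr : p <> r) :
  let P := Var p in let Q := Var q in let Rr := Var r in
  entails_Delta (And (Obl v0 P) (SPref (Neg P) (Neg Q))) (Obl v0 Q) /\
  entails_Delta (And (Obl v0 Q) (SPref P Q)) (Obl v0 P) /\
  entails_Delta (And (CondO P Q) P) (Obl v0 Q) /\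
  entails_Delta (And (CondO (And P Rr) Q) (CondO (And P (Neg Rr)) Q)) (CondO P Q) /\
  entails_Delta (CondO P Q) (Or (CondO (And P Rr) Q) (CondO (And P (Neg Rr)) Q)) /\
  entails_Delta (And (Obl v0 (And P Q)) (Obl v0 (And P (Neg Q)))) (Obl v0 P).
Proof.
  cbv zeta.
  assert (hrp : r <> p) by congruence.
  assert (hrq : r <> q) by congruence.
  pose proof (@is_lit_Var PROPS) as lit.
  split; [|split; [|split; [|split; [|split]]]].
  - intros M w [HO Hpref]; exact (obl_of_neg_pref M w v0 HO Hpref).
  - intros M w [HO Hpref]; exact (obl_of_pref M w v0 HO Hpref).
  - intros M w [HC Hp]; exact (obl_of_condO_fact M w v0 hpq (lit M p) (lit M q) HC Hp).
  - intros M w [Hpos Hneg].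
    exact (condO_merge_cases M w hpq hrp hrq (lit M p) (lit M q) Hpos Hneg).
  - intros M w HC [Hpos Hneg].
    destruct (condO_split_cases M w hpq hrp hrq (lit M p) (lit M q) HC);
      contradiction.
  - intros M w [Hpos Hneg]; exact (obl_merge_cases M w v0 hpq (lit M p) Hpos Hneg).
Qed.
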